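(* Let $(S,\tau_S)$ be a topological monoid with zero, $\lambda\ge1$ a cardinal, and let $(B^0_\lambda(S),\tau_B)$ be a topological Brandt $\lambda^0$-extension of $(S,\tau_S)$ in the class of Hausdorff topological semigroups (i.e. $(B^0_\lambda(S),\tau_B)$ is a Hausdorff topological semigroup and for some $\alpha\in\lambda$ the map $s\mapsto(\alpha,s,\alpha)$, $0_S\mapsto0$, is a homeomorphism of $S$ onto $S_{\alpha,\alpha}$). Then $(B^0_\lambda(S),\tau_B)$ is pseudocompact if and only if $\lambda$ is finite and $(S,\tau_S)$ is pseudocompact.
   Context: A topological semigroup is a Hausdorff space with jointly continuous associative operation. For a monoid $S$ with zero $0_S$, $B^0_\lambda(S)=(\lambda\times (S\setminus\{0_S\})\times\lambda)\cup\{0\}$ with $(\alpha,a,\beta)(\gamma,b,\delta)=(\alpha,ab,\delta)$ if $\beta=\gamma$ and $ab\ne0_S$, and $0$ otherwise; for $\alpha,\beta\in\lambda$, $S_{\alpha,\beta}=\{(\alpha,s,\beta):s\in S\setminus\{0_S\}\}\cup\{0\}$. Pseudocompact: every locally finite family of non-empty open sets is finite. *)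

From Stdlib Require Import List Classical ClassicalEpsilon.

Definition is_topology {X : Type} (T : (X -> Prop) -> Prop) : Prop :=
  T (fun _ => True) /\
  (forall U V, T U -> T V -> T (fun x => U x /\ V x)) /\
  (forall (I : Type) (F : I -> X -> Prop),
      (forall i, T (F i)) -> T (fun x => exists i, F i x)).

Definition hausdorff {X : Type} (T : (X -> Prop) -> Prop) : Prop :=
  forall x y : X, x <> y ->
    exists U V, T U /\ T V /\ U x /\ V y /\ (forall w, ~ (U w /\ V w)).

Definition prod_top {X Y : Type} (TX : (X -> Prop) -> Prop) (TY : (Y -> Prop) -> Prop)
  : (X * Y -> Prop) -> Prop :=
  fun W => forall p, W p ->
    exists U V, TX U /\ TY V /\ U (fst p) /\ V (snd p) /\
      (forall x y, U x -> V y -> W (x, y)).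

Definition continuous {X Y : Type} (TX : (X -> Prop) -> Prop) (TY : (Y -> Prop) -> Prop)
  (f : X -> Y) : Prop :=
  forall V, TY V -> TX (fun x => V (f x)).

Definition topological_semigroup {X : Type} (T : (X -> Prop) -> Prop) (mul : X -> X -> X) : Prop :=
  is_topology T /\ hausdorff T /\
  (forall x y w, mul x (mul y w) = mul (mul x y) w) /\
  continuous (prod_top T T) T (fun p => mul (fst p) (snd p)).

Definition monoid_with_zero {S : Type} (mul : S -> S -> S) (one z : S) : Prop :=
  (forall x y w, mul x (mul y w) = mul (mul x y) w) /\
  (forall x, mul one x = x) /\ (forall x, mul x one = x) /\
  (forall x, mul z x = z) /\ (forall x, mul x z = z) /\
  one <> z.

Definition finite_type (I : Type) : Prop := exists l : list I, forall i, In i l.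

Definition locally_finite {X I : Type} (T : (X -> Prop) -> Prop) (F : I -> X -> Prop) : Prop :=
  forall x, exists U, T U /\ U x /\
    exists l : list I, forall i, (exists y, U y /\ F i y) -> In i l.

Definition pseudocompact {X : Type} (T : (X -> Prop) -> Prop) : Prop :=
  forall (I : Type) (F : I -> X -> Prop),
    (forall i, T (F i) /\ exists x, F i x) -> locally_finite T F -> finite_type I.

(* The Brandt lambda^0-extension B^0_lambda(S): None is the zero, Some (a,s,b) with s <> 0_S. *)
Definition Bcar (L S : Type) (z : S) : Type := option (L * {s : S | s <> z} * L).

Definition Bmul {L S : Type} (mul : S -> S -> S) (z : S)
  (x y : Bcar L S z) : Bcar L S z :=
  match x, y with
  | Some (a, s, b), Some (c, t, d) =>
      match excluded_middle_informative (b = c /\ mul (proj1_sig s) (proj1_sig t) <> z) with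
      | left H => Some (a, exist _ (mul (proj1_sig s) (proj1_sig t)) (proj2 H), d)
      | right _ => None
      end
  | _, _ => None
  end.

Definition Saa {L S : Type} (z : S) (alpha : L) : Bcar L S z -> Prop :=
  fun x => match x with
           | None => True
           | Some (a, _, b) => a = alpha /\ b = alpha
           end.

Definition Bemb {L S : Type} (z : S) (alpha : L) (s : S) : Bcar L S z :=
  match excluded_middle_informative (s = z) with
  | left _ => None
  | right H => Some (alpha, exist _ s H, alpha)
  end.

Definition homeomorphism_onto {X Y : Type} (TX : (X -> Prop) -> Prop) (TY : (Y -> Prop) -> Prop)
  (f : X -> Y) (A : Y -> Prop) : Prop :=
  (forall x1 x2, f x1 = f x2 -> x1 = x2) /\
  (forall y, A y <-> exists x, f x = y) /\
  (forall U, TX U <-> exists V, TY V /\ forall x, U x <-> V (f x)).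

Definition topological_Brandt_extension {L S : Type} (mul : S -> S -> S) (z : S)
  (TS : (S -> Prop) -> Prop) (TB : (Bcar L S z -> Prop) -> Prop) : Prop :=
  topological_semigroup TB (Bmul mul z) /\
  exists alpha : L, homeomorphism_onto TS TB (Bemb z alpha) (Saa z alpha).

From Stdlib Require Import List Classical ClassicalEpsilon FunctionalExtensionality PropExtensionality.

(* Write B for B^0_lambda(S), e_ab = (a,1,b) for its matrix units and
   sigma_abcd(y) = e_ab * y * e_cd for the "sandwich" maps; sigma_abcd is continuous
   (a composite of translations), sends (b,s,c) to (a,s,d) and kills every other point. *)

Section OpenSets.
Context {X : Type} (T : (X -> Prop) -> Prop).

Lemma open_ext (A B : X -> Prop) : T A -> (forall x, A x <-> B x) -> T B.
Proof.
  intros HA HAB.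
  replace B with A; [exact HA|].
  apply functional_extensionality; intro x; apply propositional_extensionality, HAB.
Qed.

Hypothesis HT : is_topology T.

Lemma open_of_local (A : X -> Prop) :
  (forall x, A x -> exists U, T U /\ U x /\ forall y, U y -> A y) -> T A.
Proof.
  intro H. destruct HT as [_ [_ Hunion]].
  set (I := {U : X -> Prop | T U /\ forall y, U y -> A y}).
  apply (open_ext (fun x => exists i : I, proj1_sig i x)).
  - apply Hunion. intro i; exact (proj1 (proj2_sig i)).
  - intro x; split.
    + intros [i Ux]. exact (proj2 (proj2_sig i) x Ux).
    + intro Ax. destruct (H x Ax) as [U [TU [Ux HU]]].
      exists (exist _ U (conj TU HU)); exact Ux.
Qed.

Lemma open_inter (U V : X -> Prop) : T U -> T V -> T (fun x => U x /\ V x).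
Proof. destruct HT as [_ [Hinter _]]; apply Hinter. Qed.

End OpenSets.

Lemma continuous_comp {X Y Z : Type} (TX : (X -> Prop) -> Prop) (TY : (Y -> Prop) -> Prop)
  (TZ : (Z -> Prop) -> Prop) (f : X -> Y) (g : Y -> Z) :
  continuous TX TY f -> continuous TY TZ g -> continuous TX TZ (fun x => g (f x)).
Proof. intros Hf Hg V HV. exact (Hf _ (Hg V HV)). Qed.

Section TopologicalSemigroup.
Context {X : Type} (T : (X -> Prop) -> Prop) (mul : X -> X -> X).
Hypothesis Hs : topological_semigroup T mul.

Lemma mul_continuous_at O a b :
  T O -> O (mul a b) ->
  exists A B, T A /\ T B /\ A a /\ B b /\ forall x y, A x -> B y -> O (mul x y).
Proof.
  destruct Hs as [_ [_ [_ Hc]]]. intros HO Hab.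
  exact (Hc _ HO (a, b) Hab).
Qed.

Lemma left_translation_continuous c : continuous T T (mul c).
Proof.
  intros O HO. apply open_of_local; [apply Hs|]. intros y Hy.
  destruct (mul_continuous_at O c y HO Hy) as [A [B [_ [TB [Ac [By H]]]]]].
  exists B; repeat split; auto.
Qed.

Lemma right_translation_continuous d : continuous T T (fun y => mul y d).
Proof.
  intros O HO. apply open_of_local; [apply Hs|]. intros y Hy.
  destruct (mul_continuous_at O y d HO Hy) as [A [B [TA [_ [Ay [Bd H]]]]]].
  exists A; repeat split; auto.
Qed.

Lemma separate_from_idempotent x q :
  mul q q = q -> x <> q ->
  exists U W, T U /\ T W /\ U x /\ W q /\ forall a b, W a -> W b -> ~ U (mul a b).
Proof.
  intros Hq Hxq. destruct Hs as [Htop [Hhaus _]].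
  destruct (Hhaus x q Hxq) as [U [V [TU [TV [Ux [Vq Hdisj]]]]]].
  rewrite <- Hq in Vq.
  destruct (mul_continuous_at V q q TV Vq) as [A [B [TA [TB [Aq [Bq H]]]]]].
  exists U, (fun w => A w /\ B w). repeat split; auto.
  - apply open_inter; auto.
  - intros a b [Aa _] [_ Bb] Uab. apply (Hdisj (mul a b)); auto.
Qed.

End TopologicalSemigroup.

Lemma list_sig (J : Type) (P : J -> Prop) (l : list J) :
  exists l' : list {j | P j}, forall j', In (proj1_sig j') l -> In j' l'.
Proof.
  induction l as [|a l [l' Hl']]; [exists nil; simpl; tauto|].
  destruct (classic (P a)) as [Pa|nPa].
  - exists (exist _ a Pa :: l'). intros j' [E|E]; [left|right; auto].
    destruct j' as [j pj]; simpl in E; subst; f_equal; apply proof_irrelevance.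
  - exists l'. intros j' [E|E]; auto. exfalso; apply nPa; rewrite E; apply proj2_sig.
Qed.

Lemma list_union (A J : Type) (Q : A -> J -> Prop) (la : list A) :
  (forall a, exists l, forall j, Q a j -> In j l) ->
  exists l, forall a j, In a la -> Q a j -> In j l.
Proof.
  intro H. induction la as [|a la [l Hl]]; [exists nil; simpl; tauto|].
  destruct (H a) as [l1 Hl1].
  exists (l1 ++ l). intros a' j [E|E] Q'; apply in_or_app; [subst; auto|eauto].
Qed.

Section PseudocompactTransfer.
Context {X Y : Type} (TX : (X -> Prop) -> Prop) (TY : (Y -> Prop) -> Prop).

(* A locally finite family of open sets meets a continuous image of a pseudocompact
   space in only finitely many members: their preimages form a locally finite family. *)
Lemma finitely_many_meet_image (f : X -> Y) (I : Type) (F : I -> Y -> Prop) :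
  pseudocompact TX -> continuous TX TY f ->
  (forall i, TY (F i)) -> locally_finite TY F ->
  exists l, forall i, (exists x, F i (f x)) -> In i l.
Proof.
  intros Hp Hf HF Hlf.
  set (J := {i | exists x, F i (f x)}).
  destruct (Hp J (fun j x => F (proj1_sig j) (f x))) as [lJ HlJ].
  - intros [i [x Hx]]; split; [apply Hf, HF|exists x; exact Hx].
  - intro x. destruct (Hlf (f x)) as [U [TU [Ux [l Hl]]]].
    exists (fun w => U (f w)). split; [apply Hf, TU|split; [exact Ux|]].
    destruct (list_sig I (fun i => exists x, F i (f x)) l) as [l' Hl'].
    exists l'. intros j [w [Uw Fw]]. apply Hl', Hl. exists (f w); auto.
  - exists (map (@proj1_sig _ _) lJ). intros i Hi.
    exact (in_map _ lJ (exist _ i Hi) (HlJ _)).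
Qed.

Lemma pseudocompact_of_finite_cover {K : Type} (f : K -> X -> Y) (lk : list K) :
  pseudocompact TX -> (forall k, continuous TX TY (f k)) ->
  (forall y, exists k x, In k lk /\ f k x = y) -> pseudocompact TY.
Proof.
  intros Hp Hf Hcov I F HF Hlf.
  destruct (list_union K I (fun k i => exists x, F i (f k x)) lk) as [l Hl].
  - intro k. apply (finitely_many_meet_image (f k)); auto. intro i; apply HF.
  - exists l. intro i. destruct (HF i) as [_ [y Fy]].
    destruct (Hcov y) as [k [x [Hk Ey]]]. apply (Hl k); [exact Hk|].
    exists x; rewrite Ey; exact Fy.
Qed.

Lemma pseudocompact_continuous_image (f : X -> Y) :
  pseudocompact TX -> continuous TX TY f -> (forall y, exists x, f x = y) ->
  pseudocompact TY.
Proof.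
  intros Hp Hf Hsurj.
  apply (pseudocompact_of_finite_cover (fun (_ : unit) => f) (tt :: nil) Hp).
  - intro; exact Hf.
  - intro y. destruct (Hsurj y) as [x Ex]. exists tt, x. split; [left|]; auto.
Qed.

End PseudocompactTransfer.

Section Brandt.
Context (S : Type) (mul : S -> S -> S) (one z : S) (L : Type).
Hypothesis Hm : monoid_with_zero mul one z.

Local Notation M := (Bmul (L:=L) mul z).
Local Notation B := (Bcar L S z).

(* The monoid is non-trivial, so the matrix units below are non-zero points of B. *)
Lemma one_neq_zero : one <> z.
Proof. apply Hm. Qed.

Definition one_nz : {s : S | s <> z} := exist _ one one_neq_zero.

Definition munit (a b : L) : B := Some (a, one_nz, b).

Definition block (a b : L) (y : B) : Prop := exists s, y = Some (a, s, b).

Definition sandwich (a b c d : L) (y : B) : B := M (munit a b) (M y (munit c d)).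

Lemma sig_ext (s t : {s : S | s <> z}) : proj1_sig s = proj1_sig t -> s = t.
Proof. destruct s, t; simpl; intro; subst; f_equal; apply proof_irrelevance. Qed.

Lemma Bmul_match a s b t d (H : mul (proj1_sig s) (proj1_sig t) <> z) :
  M (Some (a, s, b)) (Some (b, t, d)) = Some (a, exist (fun u => u <> z) _ H, d).
Proof.
  unfold Bmul. destruct (excluded_middle_informative _) as [H'|H'].
  - do 3 f_equal; apply sig_ext; reflexivity.
  - exfalso; apply H'; auto.
Qed.

Lemma Bmul_mismatch a s b c t d : b <> c -> M (Some (a, s, b)) (Some (c, t, d)) = None.
Proof.
  intro H. unfold Bmul. destruct (excluded_middle_informative _) as [H'|H']; [|reflexivity].
  exfalso; apply H, H'.
Qed.

Lemma munit_mul a b s c : M (munit a b) (Some (b, s, c)) = Some (a, s, c).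
Proof.
  assert (H : mul one (proj1_sig s) <> z).
  { destruct Hm as [_ [H1 _]]. rewrite H1. apply proj2_sig. }
  unfold munit. rewrite (Bmul_match a one_nz b s c H).
  do 3 f_equal; apply sig_ext; simpl; apply Hm.
Qed.

Lemma mul_munit a s b c : M (Some (a, s, b)) (munit b c) = Some (a, s, c).
Proof.
  assert (H : mul (proj1_sig s) one <> z).
  { destruct Hm as [_ [_ [H1 _]]]. rewrite H1. apply proj2_sig. }
  unfold munit. rewrite (Bmul_match a s b one_nz c H).
  do 3 f_equal; apply sig_ext; simpl; apply Hm.
Qed.

Lemma sandwich_block a b c d s : sandwich a b c d (Some (b, s, c)) = Some (a, s, d).
Proof. unfold sandwich. rewrite mul_munit. apply munit_mul. Qed.

Lemma sandwich_nonzero a b c d y : sandwich a b c d y <> None -> block b c y.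
Proof.
  unfold sandwich. intro H.
  destruct y as [[[b' s] c']|]; [|exfalso; apply H; reflexivity].
  destruct (classic (c' = c)) as [<-|Hc].
  - rewrite mul_munit in H. destruct (classic (b' = b)) as [<-|Hb]; [exists s; reflexivity|].
    exfalso; apply H. unfold munit; apply Bmul_mismatch; auto.
  - exfalso; apply H. unfold munit at 2. rewrite Bmul_mismatch; auto.
Qed.

Section TopologicalBrandt.
Context (TB : (B -> Prop) -> Prop).
Hypothesis Hs : topological_semigroup TB M.

Lemma sandwich_continuous a b c d : continuous TB TB (sandwich a b c d).
Proof.
  apply (continuous_comp TB TB TB (fun y => M y (munit c d)) (M (munit a b))).
  - apply right_translation_continuous, Hs.
  - apply left_translation_continuous, Hs.
Qed.

(* S*_ab is open: it is the preimage under sigma_aabb of a neighbourhood of (a,s,b)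
   avoiding 0. *)
Lemma block_open a b : TB (block a b).
Proof.
  apply open_of_local; [apply Hs|]. intros y [s ->].
  destruct Hs as [_ [Hhaus _]].
  destruct (Hhaus (Some (a, s, b)) None ltac:(discriminate))
    as [U [V [TU [TV [Uy [VN Hdisj]]]]]].
  exists (fun w => U (sandwich a a b b w)). repeat split.
  - apply sandwich_continuous, TU.
  - rewrite sandwich_block; exact Uy.
  - intros w Uw. apply (sandwich_nonzero a a b b). intro E; rewrite E in Uw.
    exact (Hdisj None (conj Uw VN)).
Qed.

(* If W*W misses a neighbourhood U of e_aa = e_ab * e_ba, then, by continuity of the
   product at (e_ab, e_ba), one of S*_ab, S*_ba contains a non-empty open set missing W. *)
Lemma block_open_avoiding (alpha b : L) (U W : B -> Prop) :
  TB U -> U (munit alpha alpha) -> (forall x y, W x -> W y -> ~ U (M x y)) ->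
  exists O, TB O /\ (exists x, O x) /\ (forall x, O x -> ~ W x) /\
    (forall x, O x -> block alpha b x \/ block b alpha x).
Proof.
  intros TU Ue HW.
  assert (Hprod : U (M (munit alpha b) (munit b alpha))) by (unfold munit at 2; rewrite munit_mul; exact Ue).
  destruct (mul_continuous_at TB M Hs U _ _ TU Hprod) as [A [A' [TA [TA' [Ae [A'e HAA']]]]]].
  assert (Htop : is_topology TB) by apply Hs.
  destruct (classic (exists x, A x /\ block alpha b x /\ W x)) as [[x [Ax [_ Wx]]]|Nx].
  - exists (fun y => A' y /\ block b alpha y). repeat split.
    + apply open_inter; [exact Htop|exact TA'|apply block_open].
    + exists (munit b alpha); split; [exact A'e|exists one_nz; reflexivity].
    + intros y [A'y _] Wy. exact (HW x y Wx Wy (HAA' x y Ax A'y)).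
    + intros y [_ Hy]; right; exact Hy.
  - exists (fun y => A y /\ block alpha b y). repeat split.
    + apply open_inter; [exact Htop|exact TA|apply block_open].
    + exists (munit alpha b); split; [exact Ae|exists one_nz; reflexivity].
    + intros y [Ay Hby] Wy. apply Nx; exists y; auto.
    + intros y [_ Hy]; left; exact Hy.
Qed.

(* A pseudocompact Brandt extension has finitely many indices: the open sets of
   [block_open_avoiding] form a locally finite family indexed by lambda. *)
Lemma pseudocompact_index_finite (alpha : L) : pseudocompact TB -> finite_type L.
Proof.
  intro Hp.
  destruct (separate_from_idempotent TB M Hs (munit alpha alpha) None eq_refl
              ltac:(discriminate)) as [U [W [TU [TW [Ue [WN HW]]]]]].
  destruct (choice _ (fun b => block_open_avoiding alpha b U W TU Ue HW)) as [O HO].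
  apply (Hp L O).
  - intro b; destruct (HO b) as [TO [Hne _]]; split; assumption.
  - intros [[[c s] d]|].
    + exists (block c d). split; [apply block_open|split; [exists s; reflexivity|]].
      exists (c :: d :: nil). intros b [y [[t Ey] Oy]].
      destruct (HO b) as [_ [_ [_ Hblock]]].
      destruct (Hblock y Oy) as [[u Eu]|[u Eu]]; rewrite Ey in Eu; injection Eu;
        intros; subst; simpl; auto.
    + exists W. split; [exact TW|split; [exact WN|]]. exists nil.
      intros b [y [Wy Oy]]. destruct (HO b) as [_ [_ [HOW _]]]. exact (HOW y Oy Wy).
Qed.

Context (TS : (S -> Prop) -> Prop) (alpha : L).
Hypothesis Hh : homeomorphism_onto TS TB (Bemb z alpha) (Saa z alpha).

Lemma Bemb_nonzero (s : {s : S | s <> z}) : Bemb z alpha (proj1_sig s) = Some (alpha, s, alpha).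
Proof.
  unfold Bemb. destruct (excluded_middle_informative _) as [H|H].
  - exfalso; exact (proj2_sig s H).
  - do 3 f_equal; apply sig_ext; reflexivity.
Qed.

Lemma Bemb_zero : Bemb z alpha z = None.
Proof.
  unfold Bemb. destruct (excluded_middle_informative _) as [H|H]; [reflexivity|].
  exfalso; apply H; reflexivity.
Qed.

Definition corner (y : B) : S :=
  match y with
  | Some (a, s, b) =>
      if excluded_middle_informative (a = alpha /\ b = alpha) then proj1_sig s else z
  | None => z
  end.

(* [corner] is a left inverse of the embedding (so it is onto S) and, read back in B,
   it is the continuous retraction sigma_{alpha alpha alpha alpha}. *)
Lemma corner_Bemb s : corner (Bemb z alpha s) = s.
Proof.
  unfold Bemb. destruct (excluded_middle_informative (s = z)) as [->|Hs0]; [reflexivity|].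
  simpl. destruct (excluded_middle_informative _) as [_|N]; [reflexivity|].
  exfalso; apply N; split; reflexivity.
Qed.

Lemma Bemb_corner y : Bemb z alpha (corner y) = sandwich alpha alpha alpha alpha y.
Proof.
  destruct y as [[[a s] b]|]; [|apply Bemb_zero]. simpl.
  destruct (excluded_middle_informative _) as [[-> ->]|N].
  - rewrite Bemb_nonzero; symmetry; apply sandwich_block.
  - rewrite Bemb_zero. apply NNPP; intro E.
    destruct (sandwich_nonzero _ _ _ _ _ (fun H => E (eq_sym H))) as [t Et].
    injection Et; intros; subst; auto.
Qed.

(* Through the homeomorphism, open sets of S are Bemb-preimages of open sets of B. *)
Lemma corner_continuous : continuous TB TS corner.
Proof.
  destruct Hh as [_ [_ Htop]]. intros U HU.
  destruct (proj1 (Htop U) HU) as [V [TV HUV]].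
  apply (open_ext TB (fun y => V (sandwich alpha alpha alpha alpha y))).
  - apply sandwich_continuous, TV.
  - intro y. rewrite HUV, Bemb_corner. tauto.
Qed.

Lemma block_chart_continuous c d :
  continuous TS TB (fun s => sandwich c alpha alpha d (Bemb z alpha s)).
Proof.
  destruct Hh as [_ [_ Htop]]. intros V HV. apply Htop.
  exists (fun y => V (sandwich c alpha alpha d y)).
  split; [apply sandwich_continuous, HV|tauto].
Qed.

Lemma block_charts_cover (lL : list L) : (forall a, In a lL) ->
  forall y, exists (cd : L * L) s, In cd (list_prod lL lL) /\
    sandwich (fst cd) alpha alpha (snd cd) (Bemb z alpha s) = y.
Proof.
  intros HL [[[c s] d]|].
  - exists (c, d), (proj1_sig s). split; [apply in_prod; auto|].
    simpl; rewrite Bemb_nonzero; apply sandwich_block.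
  - exists (alpha, alpha), z. split; [apply in_prod; auto|].
    simpl; rewrite Bemb_zero; reflexivity.
Qed.

End TopologicalBrandt.
End Brandt.

Theorem theorem3p1 (S : Type) (mul : S -> S -> S) (one z : S)
  (TS : (S -> Prop) -> Prop) (L : Type) (TB : (Bcar L S z -> Prop) -> Prop) :
  monoid_with_zero mul one z ->
  topological_semigroup TS mul ->
  inhabited L ->
  topological_Brandt_extension mul z TS TB ->
  (pseudocompact TB <-> finite_type L /\ pseudocompact TS).
Proof.
  intros Hm _ _ [Hs [alpha Hh]]. split.
  - intro Hp. split.
    + eapply pseudocompact_index_finite; eassumption.
    + apply (pseudocompact_continuous_image TB TS (corner S z L alpha) Hp).
      * eapply corner_continuous; eassumption.
      * intro s; exists (Bemb z alpha s); apply corner_Bemb.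
  - intros [[lL HL] Hp].
    apply (pseudocompact_of_finite_cover TS TB
             (fun cd s => sandwich S mul one z L Hm (fst cd) alpha alpha (snd cd) (Bemb z alpha s))
             (list_prod lL lL) Hp).
    + intro cd; eapply block_chart_continuous; eassumption.
    + apply block_charts_cover; exact HL.
Qed.
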